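(* Let $L_1,L_2\subseteq\Sigma^*$ be regular languages with $L_1\subseteq\bigcup_{\alpha\in\Sigma^\kappa}\Sigma^*\alpha\Sigma^*\bar\alpha$ and $L_2\subseteq\bigcup_{\alpha\in\Sigma^\kappa}\alpha\Sigma^*\bar\alpha\Sigma^*$. Let $\lambda=\max\{\lambda_{L_1},\lambda_{L_2}\}$ and let $\eta=\lambda_{\mathcal{H}_\kappa(L_1,L_2)}$. Then: (i) $\sqrt{\lambda}\le\eta\le\lambda$. In particular, the growth of $\mathcal{H}_\kappa(L_1,L_2)$ is exponential (resp. polynomial, finite) if and only if the maximum growth of $L_1$ and $L_2$ is exponential (resp. polynomial, finite). (ii) If $\mathcal{H}_\kappa(L_1,L_2)$ is regular, then $\eta=\lambda$.
   Context: $\Sigma$ is a finite alphabet with at least two letters equipped with an involution $a\mapsto\bar a$ (a bijection with $\bar{\bar a}=a$), extended to words by $\overline{a_1\cdots a_m}=\bar a_m\cdots\bar a_1$. $\kappa$ is a fixed positive integer. The hairpin completion is $\mathcal{H}_\kappa(L_1,L_2)=\{\gamma\alpha\beta\bar\alpha\bar\gamma:\gamma,\alpha,\beta\in\Sigma^*,\ |\alpha|\ge\kappa,\ \gamma\alpha\beta\bar\alpha\in L_1\text{ or }\alpha\beta\bar\alpha\bar\gamma\in L_2\}$. For a language $L$, its growth indicator is $\lambda_L=\inf\{\lambda\in\mathbb{R}_{\ge0}:\exists c>0\ \forall m\in\mathbb{N}: |L\cap\Sigma^m|\le c\lambda^m\}$. The growth of $L$ is called exponential if $\lambda_L>1$,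 polynomial (sub-exponential but infinite) if $\lambda_L=1$, and finite if $\lambda_L=0$ (for regular and unambiguous linear languages these are the only possibilities). *)

From HB Require Import structures.
From mathcomp Require Import all_boot all_order all_algebra.
From mathcomp Require Import boolp classical_sets reals.
Set Implicit Arguments. Unset Strict Implicit. Unset Printing Implicit Defensive.
Import Order.TTheory GRing.Theory Num.Theory.
Local Open Scope ring_scope.
Local Open Scope classical_set_scope.

Definition lang (S : finType) := seq S -> Prop.

Definition wbar (S : finType) (inv : S -> S) (w : seq S) : seq S := rev (map inv w).

Definition regular (S : finType) (L : lang S) : Prop :=
  exists (Q : finType) (q0 : Q) (d : Q -> S -> Q) (F : pred Q),
    forall w, L w <-> F (foldl d q0 w).

Definition hairpin (S : finType) (inv : S -> S) (kappa : nat) (L1 L2 : lang S) : lang S :=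
  fun w => exists gam alp bet : seq S,
    (kappa <= size alp)%N /\
    w = gam ++ alp ++ bet ++ wbar inv alp ++ wbar inv gam /\
    (L1 (gam ++ alp ++ bet ++ wbar inv alp) \/
     L2 (alp ++ bet ++ wbar inv alp ++ wbar inv gam)).

Definition count_len (S : finType) (L : lang S) (m : nat) : nat :=
  #|[set t : m.-tuple S | `[< L (tval t) >]]|.

Definition growth (R : realType) (S : finType) (L : lang S) : R :=
  inf [set l : R | 0 <= l /\
        exists2 c : R, 0 < c & forall m : nat, (count_len L m)%:R <= c * l ^+ m].

From mathcomp Require Import all_boot all_order all_algebra.
From mathcomp Require Import boolp classical_sets reals.
From mathcomp Require Import ring lra zify.
Import Order.TTheory GRing.Theory Num.Theory.

Set Implicit Arguments. Unset Strict Implicit. Unset Printing Implicit Defensive.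

(* Write lambda(f) for the exponential growth rate of a counting function f.
   Appending the mirror image of its left flank (at most n letters) turns a word
   of L1 of length n into a hairpin word, and symmetrically for L2, so
   |L_i cap S^n| <= sum_(j <= n) |H cap S^(n+j)|, whence sqrt(lambda(L_i)) <= eta.
   Conversely a hairpin word of length m with outer flank gamma is determined by
   its L1- or L2-part, of length m - |gamma| >= m/2, so
   |H cap S^m| <= sum_(m/2 <= k <= m) (|L1 cap S^k| + |L2 cap S^k|), whence
   eta <= lambda. Both windows have linearly many terms, and a linear factor does
   not change a growth rate >= 1; a growth rate < 1 forces the count to vanish
   eventually, which settles the remaining (finite) case. If H is regular, the
   appended flank can be pumped down below the number of states of an automaton
   for H, so the window has constant width and lambda(L_i) <= eta. *)

Local Open Scope ring_scope.

Definition eventually_zero (f : nat -> nat) :=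
  exists N, forall n, (N <= n)%N -> f n = 0%N.

Section GrowthRate.
Variable R : realType.
Local Open Scope classical_set_scope.
Implicit Types (f g : nat -> nat) (l z : R).

Definition growth_bounds f : set R :=
  [set l | 0 <= l /\ exists2 c : R, 0 < c & forall m, (f m)%:R <= c * l ^+ m].

Definition growth_rate f := inf (growth_bounds f).

Lemma growth_rate_le f l : growth_bounds f l -> growth_rate f <= l.
Proof. by apply: ge_inf; exists 0 => ? []. Qed.

Lemma growth_rate_ge0 f : growth_bounds f !=set0 -> 0 <= growth_rate f.
Proof. by move=> ne; apply: lb_le_inf => // l []. Qed.

Lemma growth_bounds_le f l l' : growth_bounds f l -> l <= l' -> growth_bounds f l'.
Proof.
move=> [l0 [c c0 fc]] ll'; split; first exact: le_trans ll'.
exists c => // m; apply: le_trans (fc m) _; rewrite ler_pM2l //.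
by rewrite lerXn2r ?nnegrE // (le_trans l0).
Qed.

Lemma growth_bounds_addn g1 g2 l : growth_bounds g1 l -> growth_bounds g2 l ->
  growth_bounds (fun m => g1 m + g2 m)%N l.
Proof.
move=> [l0 [c1 c10 g1c]] [_ [c2 c20 g2c]]; split=> //.
by exists (c1 + c2) => [|m]; rewrite ?addr_gt0 // natrD mulrDl lerD.
Qed.

Lemma bernoulli_le1 (r : R) n : 0 <= r <= 1 -> r ^+ n * (1 + n%:R * (1 - r)) <= 1.
Proof.
move=> /andP[r0 r1]; elim: n => [|n IHn]; first by rewrite expr0 mul0r addr0 mulr1.
have rn0 : 0 <= r ^+ n by exact: exprn_ge0.
have n0 : 0 <= n%:R :> R by [].
rewrite exprS -addn1 natrD; move: IHn rn0; set e := r ^+ n => IHn rn0.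
have : 0 <= e * ((n%:R + 1) * ((1 - r) * (1 - r))).
  by apply: mulr_ge0 => //; apply: mulr_ge0; [lra | nra].
nra.
Qed.

Lemma natr_mul_expr_bounded (r : R) : 0 <= r < 1 ->
  exists2 C : R, 0 < C & forall m, m.+1%:R * r ^+ m <= C.
Proof.
move=> /andP[r0 r1]; set s := 1 - r.
have s0 : 0 < s by rewrite subr_gt0.
have si0 : 0 < s^-1 by rewrite invr_gt0.
(* (m + 1) <= (1 + 1/s) (1 + m s) and r^m (1 + m s) <= 1 *)
exists (1 + s^-1) => [|m]; first exact: addr_gt0.
have hb := bernoulli_le1 m (introT andP (conj r0 (ltW r1))).
have rm := exprn_ge0 m r0; move: hb rm; rewrite -/s; set e := r ^+ m => hb rm.
have n0 : 0 <= m%:R :> R by [].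
have ss : s * s^-1 = 1 by rewrite divff // gt_eqF.
have : m.+1%:R <= (1 + s^-1) * (1 + m%:R * s).
  have -> : (1 + s^-1) * (1 + m%:R * s) = 1 + m%:R * s + s^-1 + m%:R * (s * s^-1).
    by ring.
  by rewrite ss -addn1 natrD; nra.
nra.
Qed.

Lemma growth_bounds_poly f c l z : 0 < c -> 0 <= l < z ->
  (forall m, (f m)%:R <= c * m.+1%:R * l ^+ m) -> growth_bounds f z.
Proof.
move=> c0 /andP[l0 lz] fc; have z0 : 0 < z by exact: le_lt_trans lz.
have [C C0 HC] : exists2 C : R, 0 < C & forall m, m.+1%:R * (l / z) ^+ m <= C.
  by apply: natr_mul_expr_bounded; rewrite divr_ge0 ?(ltW z0) //= ltr_pdivrMr // mul1r.
split; first exact: ltW.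
exists (c * C) => [|m]; first exact: mulr_gt0.
apply: le_trans (fc m) _; rewrite -!mulrA ler_pM2l //.
by rewrite -[l in l ^+ m](divfK (lt0r_neq0 z0)) exprMn mulrA ler_pM2r ?exprn_gt0.
Qed.

Lemma growth_bound_lt1_eventually_zero f l : growth_bounds f l -> l < 1 -> eventually_zero f.
Proof.
move=> [l0 [c c0 fc]] l1.
have [C C0 HC] := natr_mul_expr_bounded (introT andP (conj l0 l1)).
have cC0 : 0 <= c * C by rewrite mulr_ge0 ?ltW.
exists (Num.Def.archi_bound (c * C)) => n Nn.
have fnC : (f n)%:R * n.+1%:R <= c * C.
  apply: le_trans (ler_wpM2r (ler0n _ _) (fc n)) _.
  by rewrite mulrAC -mulrA ler_pM2l.
have Cn : c * C < n.+1%:R.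
  by apply: lt_le_trans (archi_boundP cC0) _; rewrite ler_nat (leq_trans Nn).
have : (f n)%:R < 1 :> R by nra.
by rewrite ltrn1; case: (f n).
Qed.

Lemma growth_bounds_eventually_zero f l : eventually_zero f -> 0 < l ->
  growth_bounds f l.
Proof.
move=> [N fN] l0; split; first exact: ltW.
have t0 i : 0 <= (f i)%:R / l ^+ i by rewrite divr_ge0 // exprn_ge0 // ltW.
have s0 : 0 <= \sum_(i < N) (f i)%:R / l ^+ i by apply: sumr_ge0 => i _.
exists (1 + \sum_(i < N) (f i)%:R / l ^+ i) => [|m]; first exact: ltr_pwDl.
have lm : 0 < l ^+ m by exact: exprn_gt0.
have [mN | Nm] := ltnP m N; last by rewrite fN // mulr_ge0 // ?addr_ge0 // ltW.
rewrite -ler_pdivrMr // (bigD1 (Ordinal mN)) //=.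
have : 0 <= \sum_(i < N | i != Ordinal mN) (f i)%:R / l ^+ i by exact: sumr_ge0.
lra.
Qed.

Lemma growth_rate_eventually_zero f : eventually_zero f -> growth_rate f = 0.
Proof.
move=> f0; apply/le_anti/andP; split; last first.
  by apply: growth_rate_ge0; exists 1; exact: growth_bounds_eventually_zero.
by apply/unstable.ler_gtP => z z0; apply/growth_rate_le/growth_bounds_eventually_zero.
Qed.

Lemma growth_rate_lt1_eventually_zero f : growth_bounds f !=set0 -> growth_rate f < 1 ->
  eventually_zero f.
Proof. by move=> ne /(inf_lt ne)[l fl l1]; exact: growth_bound_lt1_eventually_zero fl l1. Qed.

Lemma exists_growth_bound_ge1 f z : growth_bounds f !=set0 -> 1 <= growth_rate f ->
  growth_rate f < z -> exists2 l, growth_bounds f l & 1 <= l < z.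
Proof.
move=> ne f1 fz; have [l fl lz] := inf_lt ne fz.
exists (Num.max l 1); first by apply: growth_bounds_le fl _; rewrite le_max lexx.
by rewrite le_max lexx orbT /= gt_max lz (le_lt_trans f1 fz).
Qed.

Lemma growth_rate_le_shift f g N : growth_bounds g !=set0 ->
  (forall n, f n <= \sum_(j < N) g (n + j))%N -> growth_rate f <= growth_rate g.
Proof.
move=> ne fg; apply: lb_le_inf => // l [l0 [c c0 gc]]; apply: growth_rate_le.
split=> //; set s := \sum_(j < N) l ^+ j.
have s0 : 0 <= s by apply: sumr_ge0 => j _; exact: exprn_ge0.
exists (c * (1 + s)) => [|n]; first by rewrite mulr_gt0 // ltr_pwDl.
apply: le_trans (_ : \sum_(j < N) c * l ^+ (n + j) <= _).
  apply: le_trans (_ : (\sum_(j < N) g (n + j))%:R <= _); first by rewrite ler_nat.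
  by rewrite natr_sum ler_sum.
under eq_bigr do rewrite exprD; rewrite -!mulr_sumr -mulrA ler_pM2l //.
by rewrite [X in _ <= X]mulrC ler_wpM2l ?exprn_ge0 // lerDr.
Qed.

Lemma sqrt_growth_rate_le_double f g : growth_bounds g !=set0 ->
  (forall n, f n <= \sum_(j < n.+1) g (n + j))%N ->
  Num.sqrt (growth_rate f) <= growth_rate g.
Proof.
move=> ne fg; have [g_lt1 | g_ge1] := ltP (growth_rate g) 1.
  have [N gN] := growth_rate_lt1_eventually_zero ne g_lt1.
  rewrite growth_rate_eventually_zero ?sqrtr0 ?growth_rate_ge0 //.
  exists N => n Nn; apply/eqP; rewrite -leqn0 (leq_trans (fg n)) // leqn0.
  by apply/eqP/big1 => j _; rewrite gN // (leq_trans Nn) ?leq_addr.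
apply/unstable.ler_gtP => z gz.
have [l [l0 [c c0 gc]] /andP[l1 lz]] := exists_growth_bound_ge1 ne g_ge1 gz.
have z0 : 0 <= z by rewrite (le_trans _ (ltW lz)) // (le_trans ler01 l1).
suff fz : growth_bounds f (z ^+ 2).
  by rewrite -(ger0_norm z0) -sqrtr_sqr ler_wsqrtr // growth_rate_le.
apply: (@growth_bounds_poly _ c (l ^+ 2)) => // [|n].
  by rewrite exprn_ge0 //= ltrXn2r.
apply: le_trans (_ : \sum_(j < n.+1) c * (l ^+ 2) ^+ n <= _); last first.
  by rewrite sumr_const card_ord -[leLHS]mulr_natr mulrAC.
apply: le_trans (_ : (\sum_(j < n.+1) g (n + j))%:R <= _); first by rewrite ler_nat.
rewrite natr_sum.
apply: ler_sum => j _; apply: le_trans (gc _) _.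
by rewrite ler_pM2l // -exprM mul2n -addnn ler_weXn2l // leq_add2l -ltnS.
Qed.

Lemma growth_rate_le_half f g : growth_bounds g !=set0 ->
  (forall m, f m <= \sum_(j < m.+1 | j.*2 <= m) g (m - j))%N ->
  growth_rate f <= growth_rate g.
Proof.
move=> ne fg; have [g_lt1 | g_ge1] := ltP (growth_rate g) 1.
  have [N gN] := growth_rate_lt1_eventually_zero ne g_lt1.
  rewrite growth_rate_eventually_zero ?growth_rate_ge0 //.
  exists N.*2 => m Nm; apply/eqP; rewrite -leqn0 (leq_trans (fg m)) // leqn0.
  by apply/eqP/big1 => j jm; rewrite gN //; lia.
apply/unstable.ler_gtP => z gz.
have [l [l0 [c c0 gc]] /andP[l1 lz]] := exists_growth_bound_ge1 ne g_ge1 gz.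
apply/growth_rate_le/(@growth_bounds_poly _ c l) => // [|m]; first by rewrite l0.
apply: le_trans (_ : (\sum_(j < m.+1 | (j.*2 <= m)%N) g (m - j))%:R <= _).
  by rewrite ler_nat.
apply: le_trans (_ : \sum_(j < m.+1) c * l ^+ m <= _); last first.
  by rewrite sumr_const card_ord -[leLHS]mulr_natr mulrAC.
rewrite big_mkcond natr_sum; apply: ler_sum => j _; case: ifP => _.
  by apply: le_trans (gc _) _; rewrite ler_pM2l // ler_weXn2l // leq_subr.
by rewrite mulr_ge0 ?exprn_ge0 // ltW.
Qed.

Lemma growth_rate_addn g1 g2 : growth_bounds g1 !=set0 -> growth_bounds g2 !=set0 ->
  growth_rate (fun m => g1 m + g2 m)%N <= Num.max (growth_rate g1) (growth_rate g2).
Proof.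
move=> ne1 ne2; apply/unstable.ler_gtP => z; rewrite gt_max => /andP[z1 z2].
have [l1 gl1 lz1] := inf_lt ne1 z1; have [l2 gl2 lz2] := inf_lt ne2 z2.
have l1l : l1 <= Num.max l1 l2 by rewrite le_max lexx.
have l2l : l2 <= Num.max l1 l2 by rewrite le_max lexx orbT.
apply/ltW/(le_lt_trans (y := Num.max l1 l2)); last by rewrite gt_max lz1 lz2.
apply/growth_rate_le/growth_bounds_addn.
  exact: growth_bounds_le gl1 l1l.
exact: growth_bounds_le gl2 l2l.
Qed.

End GrowthRate.

Arguments growth_bounds : clear implicits.
Arguments growth_rate : clear implicits.

Lemma sqrt_sandwich_classes (R : rcfType) (lam eta : R) : 0 <= lam ->
  Num.sqrt lam <= eta <= lam ->
  (1 < eta <-> 1 < lam) /\ (eta = 1 <-> lam = 1) /\ (eta = 0 <-> lam = 0).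
Proof.
move=> lam0 /andP[]; have := sqr_sqrtr lam0; have := sqrtr_ge0 lam.
move: (Num.sqrt lam) => s s0 <-; rewrite expr2 => le_s le_eta.
by split; [split=> h; nra | split; split=> h; nra].
Qed.

Section Counting.
Variable S : finType.
Implicit Types (P L M : lang S) (w u : seq S).

Lemma count_lenE P m : count_len P m = #|[set t : m.-tuple S | `[< P t >]]|.
Proof.
apply: eq_card => t; rewrite inE /in_mem /= /classical_sets.in_set.
exact: asboolb.
Qed.

Lemma count_len_le_expn P m : (count_len P m <= #|S| ^ m)%N.
Proof. by rewrite count_lenE -card_tuple max_card. Qed.

Lemma count_len_image P L (f : seq S -> seq S) m n :
  (forall w, size w = m -> P w -> exists2 u, size u = n /\ L u & w = f u) ->
  (count_len P m <= count_len L n)%N.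
Proof.
(* Mapping into option tuples avoids the need for a default m-tuple. *)
move=> Pf; pose g (u : n.-tuple S) : option (m.-tuple S) := insub (f u).
rewrite !count_lenE -(card_imset _ (@Some_inj _)).
apply: leq_trans (leq_imset_card g _); apply: subset_leq_card.
apply/fintype.subsetP => _ /imsetP[t + ->]; rewrite inE => /asboolP Pt.
have [u [su Lu] tu] := Pf t (size_tuple t) Pt.
apply/imsetP; exists (Tuple (introT eqP su)); first by rewrite inE; apply/asboolP.
by rewrite /g /= -tu valK.
Qed.

Lemma count_len_union (I : finType) (D : pred I) (P : I -> lang S) L n :
  (forall w, size w = n -> L w -> exists2 i, D i & P i w) ->
  (count_len L n <= \sum_(i | D i) count_len (P i) n)%N.
Proof.
move=> cover; rewrite count_lenE; under eq_bigr do rewrite count_lenE.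
apply: leq_trans (_ : #|\bigcup_(i | D i) [set t : n.-tuple S | `[< P i t >]]| <= _)%N.
  apply/subset_leq_card/fintype.subsetP => t; rewrite inE => /asboolP Lt.
  have [i Di Pt] := cover t (size_tuple t) Lt.
  by apply/bigcupP; exists i => //; rewrite inE; apply/asboolP.
elim/big_ind2: _ => // [|a A b B aA bB]; first by rewrite cards0.
by apply: leq_trans (leq_card_setU A B) _; exact: leq_add.
Qed.

Lemma count_len_or P L m :
  (count_len (fun w => P w \/ L w) m <= count_len P m + count_len L m)%N.
Proof.
rewrite !count_lenE; apply: leq_trans (leq_card_setU _ _).
apply/subset_leq_card/fintype.subsetP => t; rewrite !inE => -[Pt | Lt].
  by rewrite (asboolT Pt).
by rewrite (asboolT Lt) orbT.
Qed.

Lemma count_len_extendr L M n K :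
  (forall w, size w = n -> L w -> exists2 u, (size u < K)%N & M (w ++ u)) ->
  (count_len L n <= \sum_(j < K) count_len M (n + j))%N.
Proof.
move=> ext; pose P (j : 'I_K) w := exists2 u, size u = j & M (w ++ u).
apply: leq_trans (@count_len_union _ xpredT P L n _) _.
  by move=> w sw /(ext w sw)[u uK Mu]; exists (Ordinal uK) => //; exists u.
apply: leq_sum => j _; apply: (count_len_image (f := take n)) => w sw [u su Mu].
by exists (w ++ u); [rewrite size_cat sw su | rewrite take_size_cat].
Qed.

Lemma count_len_extendl L M n K :
  (forall w, size w = n -> L w -> exists2 u, (size u < K)%N & M (u ++ w)) ->
  (count_len L n <= \sum_(j < K) count_len M (n + j))%N.
Proof.
move=> ext; pose P (j : 'I_K) w := exists2 u, size u = j & M (u ++ w).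
apply: leq_trans (@count_len_union _ xpredT P L n _) _.
  by move=> w sw /(ext w sw)[u uK Mu]; exists (Ordinal uK) => //; exists u.
apply: leq_sum => j _; apply: (count_len_image (f := drop j)) => w sw [u su Mu].
by exists (u ++ w); [rewrite size_cat sw su addnC | rewrite drop_size_cat].
Qed.

End Counting.

Section Pumping.
Variable S : finType.

Lemma foldl_short (T : finType) (d : T -> S -> T) q (y : seq S) :
  exists2 y', (size y' < #|T|)%N & foldl d q y' = foldl d q y.
Proof.
elim: {y}_.+1 {-2}y (ltnSn (size y)) => // N IH y yN.
have [yT | Ty] := ltnP (size y) #|T|; first by exists y.
(* Two prefixes of y reach the same state: cut out the loop between them. *)
pose s := [seq foldl d q (take i y) | i <- iota 0 (size y).+1].
have : ~~ uniq s.
  apply/negP => /card_uniqP s_uniq; have := max_card (mem s).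
  by rewrite s_uniq size_map size_iota ltnNge Ty.
case/(uniqPn q) => i [j [ij]]; rewrite size_map size_iota => jy.
rewrite !(nth_map 0) ?size_iota ?nth_iota ?(ltn_trans ij) // !add0n => eq_ij.
have [|y' y'T ey'] := IH (take i y ++ drop j y).
  rewrite size_cat size_takel ?size_drop; lia.
by exists y' => //; rewrite ey' foldl_cat eq_ij -foldl_cat cat_take_drop.
Qed.

Lemma regular_pump (M : lang S) : regular M ->
  exists K, forall x y z, M (x ++ y ++ z) ->
    exists2 y', (size y' < K)%N & M (x ++ y' ++ z).
Proof.
move=> [T [q0 [d [F MF]]]]; exists #|T| => x y z /MF Mxyz.
have [y' y'T ey'] := foldl_short d (foldl d q0 x) y.
by exists y' => //; apply/MF; rewrite !foldl_cat ey' -!foldl_cat.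
Qed.

End Pumping.

Section LanguageGrowth.
Variables (R : realType) (S : finType).
Local Open Scope classical_set_scope.

Lemma growth_bounds_count_len (L : lang S) : growth_bounds R (count_len L) #|S|%:R.
Proof.
split=> //; exists 1 => // m.
by rewrite mul1r -natrX ler_nat count_len_le_expn.
Qed.

Lemma count_len_growth_bounded (L : lang S) : growth_bounds R (count_len L) !=set0.
Proof. by exists #|S|%:R; exact: growth_bounds_count_len. Qed.

Lemma growth_ge0 (L : lang S) : 0 <= growth R L.
Proof. exact/growth_rate_ge0/count_len_growth_bounded. Qed.

End LanguageGrowth.

Section Hairpin.
Variables (S : finType) (inv : S -> S) (kappa : nat) (L1 L2 : lang S).
Hypothesis invK : involutive inv.
Hypothesis L1_shape : forall w, L1 w -> exists alp u v : seq S,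
  size alp = kappa /\ w = u ++ alp ++ v ++ wbar inv alp.
Hypothesis L2_shape : forall w, L2 w -> exists alp u v : seq S,
  size alp = kappa /\ w = alp ++ u ++ wbar inv alp ++ v.
Local Notation H := (hairpin inv kappa L1 L2).
Implicit Types (w u : seq S).

Lemma size_wbar w : size (wbar inv w) = size w.
Proof. by rewrite size_rev size_map. Qed.

Lemma wbarK : involutive (wbar inv).
Proof. by move=> w; rewrite /wbar map_rev revK (mapK invK). Qed.

Lemma hairpin_of_L1 w : L1 w -> exists2 u, (size u <= size w)%N & H (w ++ u).
Proof.
move=> Lw; have [alp [u [v [ka ew]]]] := L1_shape Lw.
exists (wbar inv u); first by rewrite size_wbar ew size_cat leq_addr.
exists u, alp, v; split; first by rewrite ka.
by rewrite ew -!catA; split=> //; left; rewrite -ew.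
Qed.

Lemma hairpin_of_L2 w : L2 w -> exists2 u, (size u <= size w)%N & H (u ++ w).
Proof.
move=> Lw; have [alp [u [v [ka ew]]]] := L2_shape Lw.
exists (wbar inv v); first by rewrite size_wbar ew !size_cat !addnA leq_addl.
exists (wbar inv v), alp, u; rewrite wbarK -ew ka.
by split=> //; split=> //; right.
Qed.

Lemma hairpin_decomp w : H w -> exists2 j, (j.*2 <= size w)%N &
  (exists2 u, size u = (size w - j)%N /\ L1 u & w = u ++ wbar inv (take j u)) \/
  (exists2 u, size u = (size w - j)%N /\ L2 u &
     w = wbar inv (drop (size w - j.*2)%N u) ++ u).
Proof.
move=> [gam [alp [bet [_ [-> Hw]]]]]; rewrite !size_cat !size_wbar.
exists (size gam); first lia.
case: Hw => Lw; [left | right].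
  exists (gam ++ alp ++ bet ++ wbar inv alp).
    by rewrite !size_cat size_wbar; split=> //; lia.
  by rewrite take_size_cat // -!catA.
exists (alp ++ bet ++ wbar inv alp ++ wbar inv gam).
  by rewrite !size_cat !size_wbar; split=> //; lia.
have -> : alp ++ bet ++ wbar inv alp ++ wbar inv gam =
  (alp ++ bet ++ wbar inv alp) ++ wbar inv gam by rewrite -!catA.
by rewrite drop_size_cat ?wbarK // !size_cat size_wbar; lia.
Qed.

Lemma count_hairpin_le m : (count_len H m <=
  \sum_(j < m.+1 | j.*2 <= m) (count_len L1 (m - j) + count_len L2 (m - j)))%N.
Proof.
pose P (j : 'I_m.+1) w :=
  (exists2 u, size u = (m - j)%N /\ L1 u & w = u ++ wbar inv (take j u)) \/
  (exists2 u, size u = (m - j)%N /\ L2 u & w = wbar inv (drop (m - j.*2)%N u) ++ u).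
apply: leq_trans (@count_len_union _ _ (fun j : 'I_m.+1 => j.*2 <= m)%N P H m _) _.
  move=> w wm /hairpin_decomp; rewrite wm => -[j jm Pj].
  have jm1 : (j < m.+1)%N by lia.
  by exists (Ordinal jm1).
apply: leq_sum => j _; apply: leq_trans (count_len_or _ _ _) (leq_add _ _).
  exact: (count_len_image (f := fun u => u ++ wbar inv (take j u))).
exact: (count_len_image (f := fun u => wbar inv (drop (m - j.*2)%N u) ++ u)).
Qed.

Variable R : realType.

Let bounded (L : lang S) := count_len_growth_bounded R L.

Lemma sqrt_growth_L1_le_hairpin : Num.sqrt (growth R L1) <= growth R H.
Proof.
apply: sqrt_growth_rate_le_double (bounded H) _ => n.
apply: count_len_extendr => w wn /hairpin_of_L1[u uw Hwu].
by exists u; rewrite // ltnS -wn.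
Qed.

Lemma sqrt_growth_L2_le_hairpin : Num.sqrt (growth R L2) <= growth R H.
Proof.
apply: sqrt_growth_rate_le_double (bounded H) _ => n.
apply: count_len_extendl => w wn /hairpin_of_L2[u uw Huw].
by exists u; rewrite // ltnS -wn.
Qed.

Lemma growth_L1_le_hairpin : regular H -> growth R L1 <= growth R H.
Proof.
move=> /regular_pump[K pump]; apply: (growth_rate_le_shift (N := K)) (bounded H) _ => n.
apply: count_len_extendr => w _ /hairpin_of_L1[u _ Hwu].
have [|u' u'K Hwu'] := pump w u [::]; first by rewrite cats0.
by rewrite cats0 in Hwu'; exists u'.
Qed.

Lemma growth_L2_le_hairpin : regular H -> growth R L2 <= growth R H.
Proof.
move=> /regular_pump[K pump]; apply: (growth_rate_le_shift (N := K)) (bounded H) _ => n.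
apply: count_len_extendl => w _ /hairpin_of_L2[u _ Huw].
exact: pump [::] u w Huw.
Qed.

Lemma growth_hairpin_le_max : growth R H <= Num.max (growth R L1) (growth R L2).
Proof.
apply: le_trans (growth_rate_addn (bounded L1) (bounded L2)).
apply: growth_rate_le_half; last exact: count_hairpin_le.
by exists #|S|%:R; apply: growth_bounds_addn; exact: growth_bounds_count_len.
Qed.

End Hairpin.

Theorem theorem3 (R : realType) (S : finType) (inv : S -> S) (kappa : nat)
    (L1 L2 : lang S) :
  (1 < #|S|)%N -> involutive inv -> (0 < kappa)%N ->
  regular L1 -> regular L2 ->
  (forall w, L1 w -> exists alp u v : seq S,
       size alp = kappa /\ w = u ++ alp ++ v ++ wbar inv alp) ->
  (forall w, L2 w -> exists alp u v : seq S,
       size alp = kappa /\ w = alp ++ u ++ wbar inv alp ++ v) ->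
  let lam : R := Num.max (growth R L1) (growth R L2) in
  let eta : R := growth R (hairpin inv kappa L1 L2) in
  ((Num.sqrt lam <= eta /\ eta <= lam) /\
   ((1 < eta <-> 1 < lam) /\ (eta = 1 <-> lam = 1) /\ (eta = 0 <-> lam = 0))) /\
  (regular (hairpin inv kappa L1 L2) -> eta = lam).
Proof.
move=> _ invK _ _ _ L1_shape L2_shape lam eta.
have lam0 : 0 <= lam by rewrite le_max growth_ge0.
have lower : Num.sqrt lam <= eta.
  rewrite /lam maxEle; case: ifP => _.
    exact: sqrt_growth_L2_le_hairpin.
  exact: sqrt_growth_L1_le_hairpin.
have upper : eta <= lam by exact: growth_hairpin_le_max.
split; first by split; [|apply: sqrt_sandwich_classes; rewrite ?lower].
move=> H_reg; apply/le_anti; rewrite upper /= ge_max.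
by rewrite growth_L1_le_hairpin ?growth_L2_le_hairpin.
Qed.
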